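(* For every integer $k\ge 1$ and real $\zeta\in(0,1)$ there exists $\alpha_0=\alpha_0(k,\zeta)>0$ such that the following holds for every $\alpha\in(0,\alpha_0)$ and all positive integers $n,t$ with $n\ge 8k^4$, $t\ge n/(2k^3)$ and $t+1<(1-\zeta)n/k$. Let $X=\{x_1,\ldots,x_{t+1}\}$ be disjoint from $[n]$, and let $H$ be a $(1,k)$-partite $(k+1)$-graph with partition classes $X,[n]$. If every vertex of $H$ is $\alpha$-good with respect to $\mathcal{F}_{t+1}(k,n;t)$, then $\nu(H)\ge t$, and if $\nu(H)=t$ then $H$ is a subgraph of $\mathcal{F}_{t+1}(k,n;t)$ (i.e. every edge of $H$ meets $[t]$).
   Context: A $(k+1)$-graph is a pair $(V,E)$ with $E$ a family of $(k+1)$-subsets of $V$; $\nu(H)$ is the maximum number of pairwise disjoint edges of $H$. Given disjoint sets $Q,V$, a $(k+1)$-graph with vertex set $Q\cup V$ is $(1,k)$-partite with partition classes $Q,V$ if every edge $e$ satisfies $|e\cap Q|=1$ and $|e\cap V|=k$. $\mathcal{F}_{t+1}(k,n;t)$ denotes the $(1,k)$-partite $(k+1)$-graph with partition classes $X=\{x_1,\ldots,x_{t+1}\}$ and $[n]$ whose edges are all sets $\{x_i\}\cup e$ with $i\in[t+1]$, $e\in\binom{[n]}{k}$ and $e\cap[t]\ne\emptyset$. For a $(k+1)$-graph $G$ and a vertex $v$, $N_G(v)=\{S: |S|=k,\ S\cup\{v\}\in E(G)\}$. For $0<\alpha<1$, a vertex $v$ of $H$ (where $H$ has the same vertex set as $\mathcal{F}_{t+1}(k,n;t)$)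 is $\alpha$-good with respect to $\mathcal{F}_{t+1}(k,n;t)$ if $|N_{\mathcal{F}_{t+1}(k,n;t)}(v)\setminus N_H(v)|\le\alpha n^k$. *)

From mathcomp Require Import all_boot all_order all_algebra.
From mathcomp Require Import reals.
Set Implicit Arguments. Unset Strict Implicit. Unset Printing Implicit Defensive.
Import Order.TTheory GRing.Theory Num.Theory.

(* Vertex set X ∪ [n]: inl i is x_{i+1} (i < t+1), inr j is the integer j+1 of [n]. *)
Definition vtx (t n : nat) : finType := ('I_t.+1 + 'I_n)%type.

Definition isX (t n : nat) (v : vtx t n) : bool :=
  if v is inl _ then true else false.

Definition partite1k (k t n : nat) (H : {set {set vtx t n}}) : Prop :=
  forall e, e \in H ->
    #|[set v in e | isX v]| = 1 /\ #|[set v in e | ~~ isX v]| = k.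

Definition Fgraph (k t n : nat) : {set {set vtx t n}} :=
  [set (@inl 'I_t.+1 'I_n i) |: (@inr 'I_t.+1 'I_n @: e) | i : 'I_t.+1,
       e : {set 'I_n} in [set e : {set 'I_n} | (#|e| == k) && [exists j in e, (j < t)%N]]].

Definition nbhd (T : finType) (k : nat) (G : {set {set T}}) (v : T) : {set {set T}} :=
  [set S : {set T} | (#|S| == k) && ((v |: S) \in G)].

Definition good (R : realType) (k t n : nat) (alpha : R)
    (H : {set {set vtx t n}}) (v : vtx t n) : Prop :=
  (#|nbhd k (Fgraph k t n) v :\: nbhd k H v|%:R <= alpha * (n%:R ^+ k))%R.

Definition is_matching (T : finType) (M : {set {set T}}) : bool :=
  [forall e1 in M, forall e2 in M, (e1 != e2) ==> [disjoint e1 & e2]].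

Definition nu (T : finType) (H : {set {set T}}) : nat :=
  \max_(M in powerset H | is_matching M) #|M|.

From mathcomp Require Import all_boot all_order all_algebra.
From mathcomp Require Import reals.
From mathcomp Require Import zify ring lra.
Import Order.TTheory GRing.Theory Num.Theory.
Set Implicit Arguments. Unset Strict Implicit. Unset Printing Implicit Defensive.

(* Write k = r + 1 and split the vertices into X, T = [t] and O = [n] \ [t].
   A "standard" edge x + j + S has x in X, j in T and S an r-subset of O;
   all standard edges lie in F.  We grow a matching of standard edges of H
   avoiding a fixed set W one edge at a time.  Given a free x in X, either
   x + j + S is an edge for some free j in T and free r-set S of O, or x
   misses at least |free T| C(|free O|, r) edges of F.  In the latter case a
   double count over the matching finds an edge x' + j' + S' of it that can be
   traded for x + j' + S1 and x' + j + S2 (a free j in T).  Goodness bounds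
   the number B of missing edges at any vertex by alpha n^k, and for alpha
   small this budget pays for all t steps (B = 0, or 3B < t C(g, r) with
   g = n - k (t + 1) >= zeta n).  Taking W empty gives nu(H) >= t; taking W an
   edge of H outside F (which cannot meet T) gives t + 1 disjoint edges. *)

Section FiniteSets.
Variable T : finType.
Implicit Types (A P W e : {set T}) (M H : {set {set T}}).

Lemma disjP A P : reflect (forall x, x \in A -> x \in P -> False) [disjoint A & P].
Proof.
apply: (iffP pred0P) => [H x xA xP | H x] /=; first by have := H x; rewrite /= xA xP.
by apply/andP => -[]; apply: H.
Qed.

Lemma is_matchingE M : is_matching M = trivIset M.
Proof.
apply/forall_inP/trivIsetP => [H e1 e2 h1 h2 | H e1 h1].
  by have /forall_inP/(_ e2 h2)/implyP := H e1 h1.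
by apply/forall_inP => e2 h2; apply/implyP; apply: H.
Qed.

Lemma nu_ge H M : M \subset H -> trivIset M -> #|M| <= nu H.
Proof.
by move=> sMH tiM; apply: leq_bigmax_cond; rewrite powersetE sMH is_matchingE.
Qed.

Lemma trivIset_add M e : trivIset M -> e != set0 ->
  (forall f, f \in M -> [disjoint e & f]) -> trivIset (e |: M) /\ #|e |: M| = #|M|.+1.
Proof.
move=> /trivIsetP tiM /set0Pn[x xe] De.
have eM : e \notin M by apply/negP => /De /disjP; apply; exact: xe.
split; last by rewrite cardsU1 eM.
apply/trivIsetP => a b; rewrite !in_setU1.
case/orP=> [/eqP->|aM]; case/orP=> [/eqP->|bM] ne; first by rewrite eqxx in ne.
- exact: De.
- by rewrite disjoint_sym; apply: De.
- exact: tiM.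
Qed.

Lemma card_uncovered P W M c : (forall e, e \in M -> #|P :&: e| <= c) ->
  #|P| - (#|P :&: W| + #|M| * c) <= #|P :\: (W :|: cover M)|.
Proof.
move=> Pe; rewrite cardsD setIUr; apply: leq_sub2l.
rewrite cardsU; apply: leq_trans (leq_subr _ _) _; rewrite leq_add2l.
rewrite -sum_nat_const; apply: (@leq_trans (\sum_(e in M) #|P :&: e|)); last exact: leq_sum.
rewrite /cover; elim/big_rec2: _ => [|e U s _ IH]; first by rewrite setI0 cards0.
rewrite setIUr cardsU; apply: leq_trans (leq_subr _ _) _; exact: leq_add.
Qed.

Lemma sum_card_le_addpoint P (A : T -> {set {set T}}) (G : {set {set T}}) :
  (forall i i' S, i \in P -> i' \in P -> S \in A i' -> i \notin S) ->
  (forall i S, i \in P -> S \in A i -> i |: S \in G) ->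
  \sum_(i in P) #|A i| <= #|G|.
Proof.
move=> iS iG.
have -> : \sum_(i in P) #|A i| = #|[set p : T * {set T} | (p.1 \in P) && (p.2 \in A p.1)]|.
  rewrite -sum1_card; under eq_bigr do rewrite -sum1_card.
  by rewrite pair_big_dep; apply: eq_bigl => p; rewrite inE.
rewrite -(@card_in_imset _ _ (fun p => p.1 |: p.2)).
  apply: subset_leq_card; apply/subsetP => y /imsetP[p].
  by rewrite inE => /andP[h1 h2] ->; exact: iG.
move=> [i S] [i' S']; rewrite !inE /= => /andP[iP SA] /andP[i'P S'A] E.
have ii' : i = i'.
  have : i \in i' |: S' by rewrite -E setU11.
  by rewrite in_setU1 (negbTE (iS _ _ _ iP i'P S'A)) orbF => /eqP.
subst i'.
by rewrite -(setU1K (iS _ _ _ iP iP SA)) E setU1K // (iS _ _ _ iP iP S'A).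
Qed.

Lemma sum_subset_le A P (f : T -> nat) :
  A \subset P -> \sum_(i in A) f i <= \sum_(i in P) f i.
Proof. by move=> AP; rewrite [X in _ <= X](big_setID A) /= (setIidPr AP) leq_addr. Qed.

Lemma sum_restrict_le A P (f : T -> nat) :
  \sum_(i in A) (if i \in P then f i else 0) <= \sum_(i in P) f i.
Proof.
rewrite (big_setID P) /= [X in _ + X]big1 ?addn0 => [|i /setDP[_ /negbTE-> //]].
rewrite (eq_bigr f) => [|i /setIP[_ ->] //]; apply: sum_subset_le; exact: subsetIr.
Qed.

End FiniteSets.

Definition ksub (T : finType) (A : {set T}) (r : nat) : {set {set T}} :=
  [set S : {set T} | S \subset A & #|S| == r].

Lemma card_ksub (T : finType) (A : {set T}) r : #|ksub A r| = 'C(#|A|, r).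
Proof. exact: cards_draws. Qed.

Lemma bin_lower g r : r <= g -> g ^ r <= r ^ r * 'C(g, r).
Proof.
elim: r g => [|r IH] g hg; first by rewrite !expn0 bin0.
case: g hg => [//|g] hg.
have step : g.+1 ^ r <= r.+1 ^ r * 'C(g, r).
  case: r IH hg => [|r] IH hg; first by rewrite !expn0 bin0.
  rewrite -(@leq_pmul2l (r.+1 ^ r.+1)) ?expn_gt0 // mulnCA -expnMn.
  apply: (@leq_trans ((r.+2 * g) ^ r.+1)); first by rewrite leq_exp2r //; nia.
  by rewrite expnMn leq_mul2l (IH g hg) orbT.
rewrite [r.+1 ^ r.+1]expnS mulnAC -mul_bin_diag /= [g.+1 ^ r.+1]expnS.
by rewrite -mulnA leq_mul2l (mulnC 'C(g, r)) step orbT.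
Qed.

Section StandardMatchings.
Variables (T : finType) (PX PT PO : {set T}) (r : nat) (F H : {set {set T}}).
Variable W : {set T}.
Implicit Types (M : {set {set T}}) (e f g S O P : {set T}) (a b x j v : T).
Hypothesis disjXT : [disjoint PX & PT].
Hypothesis disjXO : [disjoint PX & PO].
Hypothesis disjTO : [disjoint PT & PO].
Hypothesis F_std : forall x j S,
  x \in PX -> j \in PT -> S \subset PO -> #|S| = r -> x |: (j |: S) \in F.
Variable B : nat.
Hypothesis missing_le : forall v, #|nbhd r.+1 F v :\: nbhd r.+1 H v| <= B.

Definition std_edge e : Prop := exists x j S,
  [/\ x \in PX, j \in PT, S \subset PO, #|S| = r & e = x |: (j |: S)].

Definition std_matching M : Prop :=
  [/\ trivIset M, M \subset H & forall e, e \in M -> std_edge e /\ [disjoint e & W]].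

Definition free M : {set T} := ~: (W :|: cover M).

Definition miss O a b : {set {set T}} := [set S in ksub O r | a |: (b |: S) \notin H].

Lemma ksubP O S : reflect (S \subset O /\ #|S| = r) (S \in ksub O r).
Proof. by rewrite inE; apply: (iffP andP) => -[-> /eqP]. Qed.

Lemma std_mem x j S v : x \in PX -> j \in PT -> S \subset PO -> v \in x |: (j |: S) ->
  [/\ v \in PX -> v = x, v \in PT -> v = j, v \in PO -> v \in S
    & [|| v \in PX, v \in PT | v \in PO]].
Proof.
move=> xX jT SO; rewrite !in_setU1 => /or3P[/eqP->|/eqP->|vS].
- by rewrite xX; split=> // h;
    [rewrite (disjointFr disjXT xX) in h | rewrite (disjointFr disjXO xX) in h].
- by rewrite jT orbT; split=> // h;
    [rewrite (disjointFl disjXT jT) in h | rewrite (disjointFr disjTO jT) in h].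
- have vO := subsetP SO v vS.
  by rewrite vO !orbT; split=> // h;
    [rewrite (disjointFl disjXO vO) in h | rewrite (disjointFl disjTO vO) in h].
Qed.

Lemma std_disjoint x j S x' j' S' :
  x \in PX -> j \in PT -> S \subset PO -> x' \in PX -> j' \in PT -> S' \subset PO ->
  x != x' -> j != j' -> [disjoint S & S'] -> [disjoint x |: (j |: S) & x' |: (j' |: S')].
Proof.
move=> xX jT SO x'X j'T S'O xx' jj' SS'; apply/disjP => v ve ve'.
have [vX vT vO vP] := std_mem xX jT SO ve; have [vX' vT' vO' _] := std_mem x'X j'T S'O ve'.
case/or3P: vP => [vPX | vPT | vPO].
- by move: xx'; rewrite -(vX vPX) -(vX' vPX) eqxx.
- by move: jj'; rewrite -(vT vPT) -(vT' vPT) eqxx.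
- exact: (disjP _ _ SS' v (vO vPO) (vO' vPO)).
Qed.

Lemma std_meet_card e : std_edge e ->
  [/\ #|PX :&: e| <= 1, #|PT :&: e| <= 1 & #|PO :&: e| <= r].
Proof.
case=> x [j [S [xX jT SO Sr ->]]].
have sub (P Q : {set T}) : (forall v, v \in P -> v \in x |: (j |: S) -> v \in Q) ->
    #|P :&: (x |: (j |: S))| <= #|Q|.
  by move=> h; apply/subset_leq_card/subsetP => v /setIP[]; apply: h.
split; [rewrite -(cards1 x) | rewrite -(cards1 j) | rewrite -Sr];
  apply: sub => v vP /(std_mem xX jT SO)[].
- by move=> /(_ vP) ->; rewrite set11.
- by move=> _ /(_ vP) ->; rewrite set11.
- by move=> _ _ /(_ vP).
Qed.

Lemma freeP M v : v \in free M -> v \notin W /\ (forall f, f \in M -> v \notin f).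
Proof.
rewrite inE in_setU negb_or => /andP[vW vM]; split=> // f fM.
by apply: contra vM => vf; apply/bigcupP; exists f.
Qed.

Lemma free_avoid M g : g \subset free M ->
  [disjoint g & W] /\ (forall f, f \in M -> [disjoint g & f]).
Proof.
move=> /subsetP gF; split; first by apply/disjP => v /gF /freeP[/negP].
by move=> f fM; apply/disjP => v /gF /freeP[_ /(_ f fM) /negP].
Qed.

Lemma free_avoid_rest M e g : std_matching M -> e \in M -> g \subset e :|: free M ->
  [disjoint g & W] /\ (forall f, f \in M :\ e -> [disjoint g & f]).
Proof.
move=> [/trivIsetP tiM _ stdM] eM /subsetP gE; have [_ eW] := stdM e eM.
split; first by apply/disjP => v /gE /setUP[/(disjP _ _ eW) | /freeP[/negP]].
move=> f /setD1P[fe fM]; apply/disjP => v /gE /setUP[ve|/freeP[_ /(_ f fM) /negP //]].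
by apply: (disjP _ _ (tiM e f eM fM _)) ve; rewrite eq_sym.
Qed.

Lemma std_matching_add M e : std_matching M -> std_edge e -> e \in H ->
  [disjoint e & W] -> (forall f, f \in M -> [disjoint e & f]) ->
  std_matching (e |: M) /\ #|e |: M| = #|M|.+1.
Proof.
move=> [tiM MH stdM] se eH eW De.
have e0 : e != set0.
  by case: se => x [j [S [_ _ _ _ ->]]]; apply/set0Pn; exists x; rewrite setU11.
have [tiM' cM'] := trivIset_add tiM e0 De.
split=> //; split=> //; first by rewrite subUset sub1set eH.
by move=> f /setU1P[->|/stdM].
Qed.

Lemma std_matching_sub M M' : M' \subset M -> std_matching M -> std_matching M'.
Proof.
move=> sM [tiM MH stdM]; split; [exact: trivIsetS tiM | exact: subset_trans MH |].
by move=> e /(subsetP sM) /stdM.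
Qed.

Lemma extend_direct M x j S : std_matching M ->
  x \in PX :&: free M -> j \in PT :&: free M -> S \in ksub (PO :&: free M) r ->
  x |: (j |: S) \in H -> exists M', std_matching M' /\ #|M'| = #|M|.+1.
Proof.
move=> sM /setIP[xX xF] /setIP[jT jF] /ksubP[]; rewrite subsetI => /andP[SO SF] Sr eH.
have se : std_edge (x |: (j |: S)) by exists x, j, S.
have eF : x |: (j |: S) \subset free M by rewrite !subUset !sub1set xF jF SF.
have [eW De] := free_avoid eF.
have [sM' cM'] := std_matching_add sM se eH eW De.
by exists (x |: (j |: S) |: M).
Qed.

Lemma extend_switch M e x' j' S' x j S1 S2 : std_matching M -> e \in M ->
  x' \in PX -> j' \in PT -> e = x' |: (j' |: S') ->
  x \in PX :&: free M -> j \in PT :&: free M ->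
  S1 \in ksub (PO :&: free M) r -> S2 \in ksub (PO :&: free M) r -> [disjoint S1 & S2] ->
  x |: (j' |: S1) \in H -> x' |: (j |: S2) \in H ->
  exists M', std_matching M' /\ #|M'| = #|M|.+1.
Proof.
move=> sM eM x'X j'T eE /setIP[xX xF] /setIP[jT jF] /ksubP[+ S1r] /ksubP[+ S2r].
rewrite !subsetI => /andP[S1O S1F] /andP[S2O S2F] S12 e1H e2H.
set e1 := x |: (j' |: S1); set e2 := x' |: (j |: S2).
have x'e : x' \in e by rewrite eE setU11.
have j'e : j' \in e by rewrite eE !in_setU1 eqxx orbT.
have e1E : e1 \subset e :|: free M.
  by rewrite !subUset !sub1set !in_setU xF j'e orbT (subset_trans S1F (subsetUr _ _)).
have e2E : e2 \subset e :|: free M.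
  by rewrite !subUset !sub1set !in_setU x'e jF orbT (subset_trans S2F (subsetUr _ _)).
have [e1W De1] := free_avoid_rest sM eM e1E.
have [e2W De2] := free_avoid_rest sM eM e2E.
have se1 : std_edge e1 by exists x, j', S1.
have se2 : std_edge e2 by exists x', j, S2.
have xx' : x != x' by apply: contraTneq x'e => <-; have [_ /(_ e eM)] := freeP xF.
have jj' : j' != j by apply: contraTneq j'e => ->; have [_ /(_ e eM)] := freeP jF.
have D12 f : f \in e2 |: M :\ e -> [disjoint e1 & f].
  by case/setU1P=> [->|/De1]; first exact: std_disjoint.
have [sM2 cM2] :=
  std_matching_add (std_matching_sub (subsetDl M [set e]) sM) se2 e2H e2W De2.
have [sM1 cM1] := std_matching_add sM2 se1 e1H e1W D12.
exists (e1 |: (e2 |: M :\ e)); split=> //.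
by rewrite cM1 cM2 (cardsD1 e M) eM.
Qed.

Definition std_pair a b : bool := (a \in PX) && (b \in PT) || (a \in PT) && (b \in PX).

(* Missing standard edges through a: summed over partners b, they are
   counted in the missing neighbourhood of a, hence by B. *)
Lemma miss_sum a P O : O \subset PO -> (forall b, b \in P -> std_pair a b) ->
  \sum_(b in P) #|miss O a b| <= B.
Proof.
move=> OO ab; apply: leq_trans (missing_le a).
have bS b b' S : b \in P -> S \in miss O a b' -> b \notin S.
  move=> /ab abP /setIdP[/ksubP[SO _] _]; apply/negP => /(subsetP (subset_trans SO OO)) bO.
  by case/orP: abP => /andP[_ bC];
    [rewrite (disjointFr disjTO bC) in bO | rewrite (disjointFr disjXO bC) in bO].
apply: sum_card_le_addpoint => [b b' S bP _ /(bS b b' S bP) // | b S bP SM].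
have bnS := bS b b S bP SM; move: SM => /setIdP[/ksubP[SO Sr] aH].
rewrite in_setD !inE cardsU1 bnS Sr eqxx (negbTE aH) /=.
case/orP: (ab b bP) => /andP[aC bC]; first exact: F_std (subset_trans SO OO) Sr.
by rewrite setUCA; apply: F_std (subset_trans SO OO) Sr.
Qed.

Lemma miss_hit O a b :
  #|miss O a b| < 'C(#|O|, r) -> exists2 S, S \in ksub O r & a |: (b |: S) \in H.
Proof.
move=> small; apply/exists_inP; apply: contraLR small => /exists_inPn none.
rewrite -leqNgt -card_ksub; apply/subset_leq_card/subsetP => S SK.
by rewrite inE SK none.
Qed.

Lemma miss_sub O O' a b : O' \subset O -> #|miss O' a b| <= #|miss O a b|.
Proof.
move=> OO'; apply/subset_leq_card/subsetP => S /setIdP[/ksubP[SO' Sr] aH].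
by rewrite inE aH andbT; apply/ksubP; split=> //; apply: subset_trans OO'.
Qed.

Lemma light_edge M O x j c : std_matching M -> x \in PX -> j \in PT -> O \subset PO ->
  2 * B < #|M| * c -> exists e x' j' S',
  [/\ e \in M, x' \in PX, j' \in PT, e = x' |: (j' |: S')
    & #|miss O x j'| < c /\ #|miss O j x'| < c].
Proof.
move=> [tiM _ stdM] xX jT OO big.
pose w v := (if v \in PT then #|miss O x v| else 0) + (if v \in PX then #|miss O j v| else 0).
have total : \sum_(e in M) \sum_(v in e) w v <= 2 * B.
  rewrite -big_trivIset // big_split mul2n -addnn /=.
  apply: leq_add; apply: leq_trans (sum_restrict_le _ _ _) _; apply: miss_sum => // b.
    by rewrite /std_pair xX => ->.
  by rewrite /std_pair jT orbC => ->.
have [e eM light] : exists2 e, e \in M & \sum_(v in e) w v < c.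
  apply/exists_inP; apply: contraLR big => /exists_inPn heavy.
  rewrite -leqNgt -sum_nat_const; apply: leq_trans total.
  by apply: leq_sum => e /heavy; rewrite -leqNgt.
have [[x' [j' [S' [x'X j'T _ _ eE]]]] _] := stdM e eM.
have term v : v \in e -> w v < c.
  by move=> ve; apply: leq_ltn_trans light; rewrite (bigD1 v) //= leq_addr.
have [x'e j'e] : x' \in e /\ j' \in e by rewrite eE !in_setU1 !eqxx orbT.
exists e, x', j', S'; split=> //; split.
- by have := term j' j'e; rewrite /w j'T (disjointFl disjXT j'T) addn0.
- by have := term x' x'e; rewrite /w x'X (disjointFr disjXT x'X).
Qed.

(* If B < d C(f0, r), x has a
   free completion in H; otherwise 2B < |M| C(f0 - r, r) and a switch along
   a light edge of M works. *)
Lemma augment M x (d f0 : nat) : std_matching M -> x \in PX :&: free M ->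
  0 < d -> d <= #|PT :&: free M| -> f0 <= #|PO :&: free M| ->
  B < d * 'C(f0, r) \/ 2 * B < #|M| * 'C(f0 - r, r) ->
  exists M', std_matching M' /\ #|M'| = #|M|.+1.
Proof.
move=> sM xF d0 dFT f0FO budget.
set FT := PT :&: free M; set FO := PO :&: free M.
have FOO : FO \subset PO := subsetIl _ _.
have xX : x \in PX by case/setIP: xF.
have [j jF] : exists j, j \in FT by apply/card_gt0P; apply: leq_trans dFT.
have jT : j \in PT by case/setIP: jF.
case: (boolP [exists b in FT, #|miss FO x b| < 'C(#|FO|, r)]).
  case/exists_inP=> b bF /miss_hit[S SK eH]; exact: extend_direct sM xF bF SK eH.
move=> /exists_inPn full.
have {budget} heavy : 2 * B < #|M| * 'C(f0 - r, r).
  case: budget => // small; exfalso; move: small; apply/negP; rewrite -leqNgt.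
  apply: leq_trans (miss_sum (a := x) (P := FT) FOO _); last first.
    by move=> b /setIP[bT _]; rewrite /std_pair xX bT.
  apply: (@leq_trans (#|FT| * 'C(#|FO|, r))); first by rewrite leq_mul // leq_bin2l.
  by rewrite -sum_nat_const; apply: leq_sum => b /full; rewrite -leqNgt.
have [e [x' [j' [S' [eM x'X j'T eE [light1 light2]]]]]] := light_edge sM xX jT FOO heavy.
have cFO : 'C(f0 - r, r) <= 'C(#|FO|, r).
  by rewrite leq_bin2l // (leq_trans (leq_subr _ _) f0FO).
have [S1 S1K e1H] := miss_hit (leq_trans light1 cFO).
have [S1FO S1r] := ksubP _ _ S1K.
have cFO1 : 'C(f0 - r, r) <= 'C(#|FO :\: S1|, r).
  by rewrite leq_bin2l // cardsD (setIidPr S1FO) S1r leq_sub2r.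
have [S2 /ksubP[+ S2r] e2H] :=
  miss_hit (leq_ltn_trans (miss_sub j x' (subsetDl FO S1)) (leq_trans light2 cFO1)).
rewrite subsetD => /andP[S2FO S21].
have S2K : S2 \in ksub FO r by apply/ksubP.
rewrite setUCA in e2H.
by apply: extend_switch sM eM x'X j'T eE xF jF S1K S2K _ e1H e2H; rewrite disjoint_sym.
Qed.

Lemma std_matching_of_size (t f0 : nat) :
  #|PX :&: W| + t <= #|PX| -> #|PT :&: W| + t <= #|PT| ->
  f0 + #|PO :&: W| + t.-1 * r <= #|PO| ->
  (forall m, m < t -> B < (t - m) * 'C(f0, r) \/ 2 * B < m * 'C(f0 - r, r)) ->
  exists M, std_matching M /\ #|M| = t.
Proof.
move=> cX cT cO budget.
suff grow m : m <= t -> exists M, std_matching M /\ #|M| = m by exact: grow.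
elim: m => [_|m IH mt].
  exists set0; split; last by rewrite cards0.
  split; [exact: trivIsetS (sub0set _) (trivIset1 set0) | exact: sub0set |].
  by move=> e; rewrite inE.
have [M [sM cM]] := IH (ltnW mt); have [_ _ stdM] := sM.
have meet e : e \in M -> [/\ #|PX :&: e| <= 1, #|PT :&: e| <= 1 & #|PO :&: e| <= r].
  by move=> /stdM[/std_meet_card].
have free_ge P c : (forall e, e \in M -> #|P :&: e| <= c) ->
    #|P| - (#|P :&: W| + m * c) <= #|P :&: free M|.
  by move=> Pc; rewrite -cM /free -setDE; apply: card_uncovered.
have fX := free_ge PX 1 (fun e eM => let: And3 h _ _ := meet e eM in h).
have fT := free_ge PT 1 (fun e eM => let: And3 _ h _ := meet e eM in h).
have fO := free_ge PO r (fun e eM => let: And3 _ _ h := meet e eM in h).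
have [x xF] : exists x, x \in PX :&: free M by apply/card_gt0P; lia.
have mr : m * r <= t.-1 * r by rewrite leq_mul2r -ltnS prednK ?mt ?orbT //; lia.
have dF : t - m <= #|PT :&: free M| by lia.
have f0F : f0 <= #|PO :&: free M| by lia.
have bm := budget m mt; rewrite -[X in 2 * B < X * _]cM in bm.
have [M' [sM' cM']] := augment sM xF (ltac:(lia) : 0 < t - m) dF f0F bm.
by exists M'; rewrite cM' cM.
Qed.

Lemma std_matching_nu M : std_matching M -> #|M| <= nu H.
Proof. by case=> tiM MH _; apply: nu_ge. Qed.

Lemma std_matching_nu_avoid M : W \in H -> W != set0 -> std_matching M -> #|M|.+1 <= nu H.
Proof.
move=> WH W0 [tiM MH stdM].
have WM f : f \in M -> [disjoint W & f] by move=> /stdM[_]; rewrite disjoint_sym.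
have [tiM' <-] := trivIset_add tiM W0 WM.
by apply: nu_ge tiM'; rewrite subUset sub1set WH.
Qed.

End StandardMatchings.

Section Classes.
Variables t n : nat.
Implicit Types (e S : {set vtx t n}) (v : vtx t n).

Definition PX : {set vtx t n} := [set v : vtx t n | isX v].
Definition PT : {set vtx t n} := [set v : vtx t n | if v is inr j then j < t else false].
Definition PO : {set vtx t n} := ~: (PX :|: PT).

Lemma PX_inl : PX = inl @: [set: 'I_t.+1].
Proof.
apply/setP => -[i|j]; rewrite !inE /=; first by rewrite mem_imset ?inE //; exact: inl_inj.
by apply/esym/negbTE/negP => /imsetP[].
Qed.

Lemma PT_inr : PT = inr @: [set j : 'I_n | j < t].
Proof.
apply/setP => -[i|j]; rewrite !inE /=; last by rewrite mem_imset ?inE //; exact: inr_inj.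
by apply/esym/negbTE/negP => /imsetP[].
Qed.

Lemma setD_PX S : S :\: PX = inr @: (inr @^-1: S).
Proof.
apply/setP => -[i|j]; rewrite !inE /=; last by rewrite mem_imset ?inE //; exact: inr_inj.
by apply/esym/negbTE/negP => /imsetP[].
Qed.

Lemma disjXT : [disjoint PX & PT].
Proof. by apply/disjP => -[i|j]; rewrite !inE. Qed.

Lemma disjXO : [disjoint PX & PO].
Proof. by apply/disjP => v vX; rewrite in_setC in_setU vX. Qed.

Lemma disjTO : [disjoint PT & PO].
Proof. by apply/disjP => v vT; rewrite in_setC in_setU vT orbT. Qed.

Lemma card_PX : #|PX| = t.+1.
Proof. by rewrite PX_inl card_imset ?cardsT ?card_ord //; exact: inl_inj. Qed.

Lemma card_PT : t <= n -> #|PT| = t.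
Proof.
move=> tn; rewrite PT_inr card_imset; last exact: inr_inj.
have -> : [set j : 'I_n | j < t] = widen_ord tn @: [set: 'I_t].
  apply/setP => j; rewrite inE; apply/idP/imsetP => [jt | [i _ ->] /=]; last exact: ltn_ord.
  by exists (Ordinal jt); rewrite ?inE //; apply: val_inj.
by rewrite card_imset ?cardsT ?card_ord // => i i' [] /val_inj.
Qed.

Lemma card_PO : t <= n -> #|PO| = n - t.
Proof.
move=> tn; have := cardsC (PX :|: PT).
rewrite cardsU (disjoint_setI0 disjXT) cards0 subn0 card_PX card_PT //.
by rewrite card_sum !card_ord /PO; lia.
Qed.

Lemma in_Fgraph k e x v :
  e :&: PX = [set x] -> #|e :\: PX| = k -> v \in e :&: PT -> e \in Fgraph k t n.
Proof.
move=> eX eY /setIP[ve vT].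
have /setIP[_ xX] : x \in e :&: PX by rewrite eX set11.
case: x xX eX => [i _ eX | b]; last by rewrite inE.
have eE : e = inl i |: inr @: (inr @^-1: e) by rewrite -setD_PX -eX setID.
case: v ve vT => [a|j] ve; rewrite inE // => jt.
rewrite eE; apply: imset2_f => //; rewrite inE -eY setD_PX card_imset; last exact: inr_inj.
by rewrite eqxx; apply/existsP; exists j; rewrite !inE ve.
Qed.

Lemma std_in_F r x j S :
  x \in PX -> j \in PT -> S \subset PO -> #|S| = r -> x |: (j |: S) \in Fgraph r.+1 t n.
Proof.
move=> xX jT SO Sr.
have classes := std_mem disjXT disjXO disjTO xX jT SO.
have jS : j \notin S by apply/negP => /(subsetP SO); rewrite (disjointFr disjTO jT).
have xjS : x \notin j |: S.
  rewrite in_setU1 negb_or; apply/andP; split.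
    by apply: contraTneq jT => <-; rewrite (disjointFr disjXT xX).
  by apply/negP => /(subsetP SO); rewrite (disjointFr disjXO xX).
have eX : (x |: (j |: S)) :&: PX = [set x].
  apply/setP => v; rewrite in_setI in_set1; apply/andP/eqP => [[ve vX]|->].
    by have [+ _ _ _] := classes v ve; apply.
  by rewrite setU11 xX.
apply: (in_Fgraph (x := x) (v := j) eX).
  by rewrite cardsD eX cards1 !cardsU1 jS xjS Sr.
by rewrite inE jT !in_setU1 eqxx orbT.
Qed.

Lemma partite_cards k H e : partite1k k H -> e \in H ->
  #|e :&: PX| = 1 /\ #|e :\: PX| = k.
Proof.
move=> pH /pH[cX cY].
have -> : e :&: PX = [set v in e | isX v] by apply/setP => v; rewrite !inE.
by have -> : e :\: PX = [set v in e | ~~ isX v] by apply/setP => v; rewrite !inE andbC.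
Qed.

Lemma nu_ge_or_subgraph r (H : {set {set vtx t n}}) B f0 : t <= n ->
  partite1k r.+1 H ->
  (forall v, #|nbhd r.+1 (Fgraph r.+1 t n) v :\: nbhd r.+1 H v| <= B) ->
  f0 + r.+1 + t.-1 * r <= n - t ->
  (forall m, m < t -> B < (t - m) * 'C(f0, r) \/ 2 * B < m * 'C(f0 - r, r)) ->
  t <= nu H /\ (nu H = t -> H \subset Fgraph r.+1 t n).
Proof.
move=> tn pH missB roomO budget.
have grow W : #|PX :&: W| <= 1 -> PT :&: W = set0 -> #|PO :&: W| <= r.+1 ->
    exists M, std_matching PX PT PO r H W M /\ #|M| = t.
  move=> wX wT wO.
  apply: (std_matching_of_size disjXT disjXO disjTO (@std_in_F r) missB (f0 := f0)) => //.
  - by rewrite card_PX; lia.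
  - by rewrite wT cards0 card_PT.
  - by rewrite card_PO //; lia.
split.
  have [||| M [sM cM]] := grow set0; rewrite ?setI0 ?cards0 //.
  by have := std_matching_nu sM; rewrite cM.
move=> nut; apply/subsetP => e eH; apply: contraT => eF.
have [eX eY] := partite_cards pH eH.
have eT : PT :&: e = set0.
  apply/eqP/set0Pn => -[v vTe]; apply: (negP eF).
  have /eqP/cards1P[x ex] := eX; rewrite setIC in vTe; exact: in_Fgraph ex eY vTe.
have eO : #|PO :&: e| <= r.+1.
  by rewrite -eY; apply/subset_leq_card/subsetP => v; rewrite !inE => /andP[/norP[-> _] ->].
have e0 : e != set0 by apply: contra_eqN eX => /eqP->; rewrite set0I cards0.
have eX1 : #|PX :&: e| <= 1 by rewrite setIC eX.
have [M [sM cM]] := grow e eX1 eT eO.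
by have := std_matching_nu_avoid eH e0 sM; rewrite cM nut ltnn.
Qed.

End Classes.

Lemma budget_split t r f0 B : r <= f0 -> B = 0 \/ 3 * B < t * 'C(f0 - r, r) ->
  forall m, m < t -> B < (t - m) * 'C(f0, r) \/ 2 * B < m * 'C(f0 - r, r).
Proof.
move=> rf0 [-> m mt | small m mt]; first by left; rewrite muln_gt0 subn_gt0 mt bin_gt0.
have mono : (t - m) * 'C(f0 - r, r) <= (t - m) * 'C(f0, r).
  by rewrite leq_mul // leq_bin2l // leq_subr.
have split_t : m * 'C(f0 - r, r) + (t - m) * 'C(f0 - r, r) = t * 'C(f0 - r, r).
  by rewrite -mulnDl subnKC // ltnW.
case: (ltnP B ((t - m) * 'C(f0, r))) => hB; [by left | right; lia].
Qed.

Local Open Scope ring_scope.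

(* The threshold alpha0(k, zeta) for k = r + 1: the minimum of the two bounds
   used in budget_third and budget_zero below. *)
Definition alpha0 (R : realType) (r : nat) (z : R) : R :=
  Num.min (z ^+ r / (6 * r.+1%:R ^+ (r + 3))) ((z / r.+1%:R) ^+ r.+1).

Lemma alpha0_gt0 (R : realType) r (z : R) : 0 < z -> 0 < alpha0 r z.
Proof.
move=> z0; rewrite lt_min !(divr_gt0, exprn_gt0, mulr_gt0) ?ltr0n //.
Qed.

Section Budget.
Variables (R : realType) (r t n g B : nat) (z a : R).
Hypotheses (z0 : 0 < z) (a_small : a < alpha0 r z) (n0 : (0 < n)%N).
Hypothesis g_large : z * n%:R <= g%:R.
Hypothesis B_small : B%:R <= a * n%:R ^+ r.+1.

(* When g < r, the bound alpha n^k is below 1, so nothing is missing. *)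
Lemma budget_zero : (g < r)%N -> B = 0%N.
Proof.
move=> gr; set K : R := r.+1%:R; set N : R := n%:R.
have K0 : 0 < K by rewrite ltr0n.
have N0 : 0 < N by rewrite ltr0n.
have a_lt : a < (z / K) ^+ r.+1.
  by apply: lt_le_trans a_small _; rewrite /alpha0 ge_min lexx orbT.
suff : B%:R < 1 :> R by rewrite -[1]/(1%:R) ltr_nat ltnS leqn0 => /eqP.
apply: le_lt_trans B_small _.
apply: (@lt_le_trans _ _ ((z / K) ^+ r.+1 * N ^+ r.+1)); first by rewrite ltr_pM2r ?exprn_gt0.
rewrite -exprMn mulrAC; apply: exprn_ile1; first by rewrite divr_ge0 ?mulr_ge0 ?ltW.
rewrite ler_pdivrMr // mul1r; apply: le_trans g_large _.
by rewrite ler_nat ltnW // ltnW.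
Qed.

(* When r <= g, using C(g, r) >= (g/r)^r >= (z n / k)^r and t >= n / (2k^3),
   three times the budget is below t C(g, r). *)
Lemma budget_third : n%:R / (2 * r.+1%:R ^+ 3) <= t%:R :> R -> (r <= g)%N ->
  (3 * B < t * 'C(g, r))%N.
Proof.
move=> ht rg; set K : R := r.+1%:R; set N : R := n%:R.
have K0 : 0 < K by rewrite ltr0n.
have N0 : 0 < N by rewrite ltr0n.
have a_lt : a < z ^+ r / (6 * K ^+ (r + 3)).
  by apply: lt_le_trans a_small _; rewrite /alpha0 ge_min lexx.
have binom : z ^+ r * N ^+ r / K ^+ r <= 'C(g, r)%:R.
  rewrite ler_pdivrMr ?exprn_gt0 //.
  apply: (@le_trans _ _ (g%:R ^+ r)).
    by rewrite -exprMn; apply: lerXn2r; rewrite ?nnegrE ?ler0n // mulr_ge0 // ltW.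
  apply: (@le_trans _ _ (r%:R ^+ r * 'C(g, r)%:R)).
    by rewrite -!natrX -natrM ler_nat bin_lower.
  rewrite mulrC ler_wpM2l //.
  by apply: lerXn2r; rewrite ?nnegrE ?ler0n // ler_nat.
rewrite -(ltr_nat R) !natrM.
apply: (@le_lt_trans _ _ (3%:R * (a * N ^+ r.+1))); first by rewrite ler_wpM2l.
apply: (@lt_le_trans _ _ (3%:R * (z ^+ r / (6 * K ^+ (r + 3)) * N ^+ r.+1))).
  by rewrite ltr_pM2l ?ltr0n // ltr_pM2r // exprn_gt0.
apply: (@le_trans _ _ ((N / (2 * K ^+ 3)) * (z ^+ r * N ^+ r / K ^+ r))); last first.
  apply: ler_pM => //; first by rewrite divr_ge0 ?ltW ?mulr_gt0 ?exprn_gt0.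
  by rewrite divr_ge0 ?mulr_ge0 ?exprn_ge0 ?ltW.
rewrite le_eqVlt; apply/orP; left; apply/eqP.
have K3 : K ^+ 3 != 0 by rewrite expf_neq0 // gt_eqF.
have Kr : K ^+ r != 0 by rewrite expf_neq0 // gt_eqF.
rewrite exprS exprD; field.
by rewrite Kr addrC natr1 gt_eqF.
Qed.

End Budget.

Lemma budget_small (R : realType) r t n g B (z a : R) :
  0 < z -> a < alpha0 r z -> (0 < n)%N ->
  n%:R / (2 * r.+1%:R ^+ 3) <= t%:R :> R -> z * n%:R <= g%:R -> B%:R <= a * n%:R ^+ r.+1 ->
  B = 0%N \/ (3 * B < t * 'C(g, r))%N.
Proof.
move=> z0 aa n0 ht hg hB; case: (ltnP g r) => gr.
  by left; apply: (budget_zero z0 aa n0 hg hB).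
by right; apply: (budget_third z0 aa n0 hg hB ht).
Qed.

Lemma room_for_matching (R : realType) r t n (z : R) : 0 < z ->
  t.+1%:R < (1 - z) * n%:R / r.+1%:R ->
  (r.+1 * t.+1 < n)%N /\ z * n%:R <= (n - r.+1 * t.+1)%:R.
Proof.
move=> z0; rewrite ltr_pdivlMr ?ltr0n // => hn.
have key : (r.+1 * t.+1)%:R + z * n%:R < n%:R :> R by rewrite natrM mulrC; lra.
have ktn : (r.+1 * t.+1 < n)%N.
  by rewrite -(ltr_nat R); apply: le_lt_trans key; rewrite lerDl mulr_ge0 ?ler0n ?ltW.
by split=> //; rewrite natrB ?(ltnW ktn) //; lra.
Qed.

(* With B the largest number of edges of F missing at a vertex, the hypotheses
   give room k (t + 1) < n and the small budget; the combinatorial core then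
   applies with f0 = g + r, g = n - k (t + 1). *)
Theorem lemma4p1 (R : realType) (k : nat) (zeta : R) :
  (1 <= k)%N -> 0 < zeta < 1 ->
  exists alpha0 : R, 0 < alpha0 /\
    forall (alpha : R) (n t : nat),
      0 < alpha < alpha0 ->
      (0 < n)%N -> (0 < t)%N ->
      (8 * k ^ 4 <= n)%N ->
      (n%:R / (2 * k%:R ^+ 3) : R) <= t%:R ->
      (t.+1)%:R < (1 - zeta) * n%:R / k%:R ->
      forall H : {set {set vtx t n}},
        partite1k k H ->
        (forall v : vtx t n, good k alpha H v) ->
        (t <= nu H)%N /\ (nu H = t -> H \subset Fgraph k t n).
Proof.
move=> k1 /andP[z0 _]; case: k k1 => // r _.
exists (alpha0 r zeta); split=> [|alpha n t /andP[a0 aa] n0 t0 _ ht hn H pH goodH].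
  exact: alpha0_gt0.
have [ktn hg] := room_for_matching z0 hn.
pose missing v := #|nbhd r.+1 (Fgraph r.+1 t n) v :\: nbhd r.+1 H v|.
have missB v : (missing v <= \max_u missing u)%N by apply: leq_bigmax.
have BR : (\max_u missing u)%:R <= alpha * n%:R ^+ r.+1.
  have [v0 ->] := @bigop.eq_bigmax _ missing (ltac:(by apply/card_gt0P; exists (inl ord0))).
  exact: goodH.
apply: (nu_ge_or_subgraph (f0 := n - r.+1 * t.+1 + r) _ pH missB); [lia | nia |].
apply: budget_split; rewrite ?leq_addl // addnK.
exact: budget_small z0 aa n0 ht hg BR.
Qed.
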